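(* Assume that for each $\ell\in I_{n-1}$ and every $j\in I_n\setminus I_\ell$, $\alpha_jY^{\{\ell\}}<1$ and every $y\in\gamma_\ell\cap\pi_1\cap\cdots\cap\pi_{\ell-1}$ satisfies $\alpha_jy\le 1$. Then $Y^{\{n\}}=(0,\dots,0,a_{nn}^{-1})^T$ is a global attractor.
   Context: Fix $n\ge 2$ and $I_m=\{1,\dots,m\}$. Consider the Lotka–Volterra system $x_i'=b_ix_i(1-\alpha_ix)$, $i\in I_n$, where $b_i>0$, $\alpha_i=(a_{i1},\dots,a_{in})$ with $a_{ii}>0$ and $a_{ij}\ge 0$. Solutions are considered in $\mathbb{R}^n_+$. An equilibrium $x^*\in\mathbb{R}^n_+$ is a global attractor if every solution with $x(0)\in\operatorname{int}\mathbb{R}^n_+$ satisfies $x(t)\to x^*$. $Y^{\{\ell\}}$ denotes the point with $\ell$th coordinate $a_{\ell\ell}^{-1}$ and all other coordinates $0$. $\pi_i=\{x\in\mathbb{R}^n_+:x_i=0\}$ (for $\ell=1$ the empty intersection of $\pi$'s is $\mathbb{R}^n_+$), $\gamma_i=\{x\in\mathbb{R}^n_+:\alpha_ix=1\}$. *)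

(* classical reals. Indices are 1-based: coordinates 1..n. *)
From Stdlib Require Import Reals Lra Lia.
Open Scope R_scope.

Fixpoint sumN (n : nat) (f : nat -> R) : R :=
  match n with
  | O => 0
  | S m => sumN m f + f (S m)
  end.

Definition alpha (n : nat) (a : nat -> nat -> R) (i : nat) (x : nat -> R) : R :=
  sumN n (fun j => a i j * x j).

Definition Yl (a : nat -> nat -> R) (l : nat) : nat -> R :=
  fun k => if Nat.eqb k l then / a l l else 0.

Definition nonneg_orthant (n : nat) (x : nat -> R) : Prop :=
  forall k, (1 <= k <= n)%nat -> 0 <= x k.

Definition LV_solution (n : nat) (a : nat -> nat -> R) (b : nat -> R)
    (x : R -> nat -> R) : Prop :=
  (forall i, (1 <= i <= n)%nat ->
     forall t, 0 < t ->
       derivable_pt_lim (fun s => x s i) t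
         (b i * x t i * (1 - alpha n a i (x t)))) /\
  (forall i, (1 <= i <= n)%nat ->
     forall eps, 0 < eps -> exists delta, 0 < delta /\
       forall t, 0 <= t < delta -> Rabs (x t i - x 0 i) < eps).

Definition global_attractor (n : nat) (a : nat -> nat -> R) (b : nat -> R)
    (xs : nat -> R) : Prop :=
  nonneg_orthant n xs /\
  forall x : R -> nat -> R,
    LV_solution n a b x ->
    (forall i, (1 <= i <= n)%nat -> 0 < x 0 i) ->
    forall i, (1 <= i <= n)%nat ->
      forall eps, 0 < eps -> exists T, forall t, T <= t ->
        Rabs (x t i - xs i) < eps.

(* The hypotheses first yield two inequalities on the matrix: a_jl < a_ll and
   a_jk <= a_lk whenever l < j and l < k (tested on Y^{l} and on points of
   gamma_l supported on two coordinates).  Along a solution, which stays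
   positive, ln x_i has derivative b_i (1 - alpha_i x); a barrier principle
   for such relative growth rates shows that each x_i ends below any level
   above 1/a_ii.  Species 1, ..., n-1 die out, by strong induction on l: for
   Z_l = sum_{j > l} x_j^(b_l / b_j), the matrix inequalities make the rate of
   Z_l exceed that of x_l by d x_l (d a gap below a_ll in column l) up to the
   negligible earlier species; hence Z_l persists, and x_l / Z_l, so also x_l,
   tends to 0.  Finally x_n grows whenever it is below (1 - eps)/a_nn, which
   gives convergence to Y^{n}. *)
From Stdlib Require Import Reals Lra Lia Classical.
Open Scope R_scope.

Lemma sumN_ext N f g :
  (forall k, (1 <= k <= N)%nat -> f k = g k) -> sumN N f = sumN N g.
Proof.
  induction N as [|N IH]; intros Hfg; simpl; [reflexivity|].
  f_equal; [apply IH; intros k Hk|]; apply Hfg; lia.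
Qed.

Lemma sumN_le N f g :
  (forall k, (1 <= k <= N)%nat -> f k <= g k) -> sumN N f <= sumN N g.
Proof.
  induction N as [|N IH]; intros Hfg; simpl; [lra|].
  apply Rplus_le_compat; [apply IH; intros k Hk|]; apply Hfg; lia.
Qed.

Lemma sumN_plus N f g : sumN N (fun k => f k + g k) = sumN N f + sumN N g.
Proof. induction N as [|N IH]; simpl; [ring|rewrite IH; ring]. Qed.

Lemma sumN_scal N c f : sumN N (fun k => c * f k) = c * sumN N f.
Proof. induction N as [|N IH]; simpl; [ring|rewrite IH; ring]. Qed.

Lemma sumN_const N c : sumN N (fun _ => c) = INR N * c.
Proof. induction N as [|N IH]; simpl sumN; [simpl; ring|rewrite IH, S_INR; ring]. Qed.

Lemma sumN_single N p f : (1 <= p <= N)%nat ->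
  sumN N (fun k => if Nat.eqb k p then f k else 0) = f p.
Proof.
  induction N as [|N IH]; intros Hp; [lia|cbn [sumN]].
  destruct (Nat.eqb_spec (S N) p) as [<-|Hne].
  - rewrite (sumN_ext N _ (fun _ => 0)), sumN_const; [ring|].
    intros k Hk. destruct (Nat.eqb_spec k (S N)); [lia|reflexivity].
  - rewrite IH; [ring|lia].
Qed.

Lemma sumN_nonneg N f :
  (forall k, (1 <= k <= N)%nat -> 0 <= f k) -> 0 <= sumN N f.
Proof.
  intros Hf. rewrite <- (Rmult_0_r (INR N)), <- sumN_const. now apply sumN_le.
Qed.

Lemma sumN_ge_term N f p :
  (forall k, (1 <= k <= N)%nat -> 0 <= f k) -> (1 <= p <= N)%nat -> f p <= sumN N f.
Proof.
  intros Hf Hp. rewrite <- (sumN_single N p f Hp) at 1. apply sumN_le.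
  intros k Hk. destruct (Nat.eqb_spec k p); [lra|now apply Hf].
Qed.

Lemma sumN_ge_selected N (p : nat -> bool) f j :
  (forall k, (1 <= k <= N)%nat -> 0 <= f k) -> (1 <= j <= N)%nat -> p j = true ->
  f j <= sumN N (fun k => if p k then f k else 0).
Proof.
  intros Hf Hj Hpj. replace (f j) with (if p j then f j else 0) by (rewrite Hpj; reflexivity).
  apply (sumN_ge_term N (fun k => if p k then f k else 0)); [|exact Hj].
  intros k Hk. destruct (p k); [apply Hf, Hk|lra].
Qed.

Lemma sumN_derivable N (F : R -> nat -> R) F' t :
  (forall k, (1 <= k <= N)%nat -> derivable_pt_lim (fun s => F s k) t (F' k)) ->
  derivable_pt_lim (fun s => sumN N (F s)) t (sumN N F').
Proof.
  induction N as [|N IH]; intros HF; simpl; [apply derivable_pt_lim_const|].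
  apply (derivable_pt_lim_plus (fun s => sumN N (F s)) (fun s => F s (S N)));
    [apply IH; intros k Hk|]; apply HF; lia.
Qed.

Lemma sumN_continuity N (F : R -> nat -> R) t :
  (forall k, (1 <= k <= N)%nat -> continuity_pt (fun s => F s k) t) ->
  continuity_pt (fun s => sumN N (F s)) t.
Proof.
  induction N as [|N IH]; intros HF; simpl; [apply continuity_pt_const; now intros u v|].
  apply (continuity_pt_plus (fun s => sumN N (F s)) (fun s => F s (S N)));
    [apply IH; intros k Hk|]; apply HF; lia.
Qed.

Lemma finite_min_pos N (P : nat -> Prop) (f : nat -> R) :
  (forall k, (1 <= k <= N)%nat -> P k -> 0 < f k) ->
  exists m, 0 < m /\ forall k, (1 <= k <= N)%nat -> P k -> m <= f k.
Proof.
  induction N as [|N IH]; intros Hf; [exists 1; split; [lra|intros; lia]|].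
  destruct IH as [m [Hm Hmin]]; [intros k Hk; apply Hf; lia|].
  destruct (classic (P (S N))) as [HP|HP].
  - exists (Rmin m (f (S N))). split; [apply Rmin_pos; [exact Hm|apply Hf; [lia|exact HP]]|].
    intros k Hk Pk. destruct (Nat.eq_dec k (S N)) as [->|Hne]; [apply Rmin_r|].
    eapply Rle_trans; [apply Rmin_l|apply Hmin; [lia|exact Pk]].
  - exists m. split; [exact Hm|]. intros k Hk Pk.
    destruct (Nat.eq_dec k (S N)) as [->|Hne]; [contradiction|apply Hmin; [lia|exact Pk]].
Qed.

Lemma alpha_add n a i y z :
  alpha n a i (fun k => y k + z k) = alpha n a i y + alpha n a i z.
Proof. unfold alpha. rewrite <- sumN_plus. apply sumN_ext. intros; ring. Qed.

Lemma alpha_unit n a i p v : (1 <= p <= n)%nat ->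
  alpha n a i (fun k => if Nat.eqb k p then v else 0) = a i p * v.
Proof.
  intros Hp. unfold alpha. rewrite <- (sumN_single n p (fun k => a i k * v) Hp).
  apply sumN_ext. intros k _. destruct (Nat.eqb k p); ring.
Qed.

Lemma alpha_ge_diag n a i y :
  (forall k, (1 <= k <= n)%nat -> 0 <= a i k) -> nonneg_orthant n y ->
  (1 <= i <= n)%nat -> a i i * y i <= alpha n a i y.
Proof.
  intros Ha Hy Hi. apply (sumN_ge_term n (fun k => a i k * y k)); [|exact Hi].
  intros k Hk. apply Rmult_le_pos; auto.
Qed.

Lemma alpha_le_diag n a i y A eta :
  (forall k, (1 <= k <= n)%nat -> 0 <= a i k <= A) -> nonneg_orthant n y ->
  (1 <= i <= n)%nat -> 0 <= eta ->
  (forall k, (1 <= k <= n)%nat -> k <> i -> y k <= eta) ->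
  alpha n a i y <= a i i * y i + INR n * A * eta.
Proof.
  intros Ha Hy Hi Heta Hsmall. unfold alpha.
  rewrite <- (sumN_single n i (fun k => a k k * y k) Hi), Rmult_assoc, <- sumN_const,
    <- sumN_plus.
  apply sumN_le. intros k Hk. destruct (Ha k Hk) as [Hk0 HkA].
  assert (HA : 0 <= A) by (destruct (Ha i Hi); lra).
  destruct (Nat.eqb_spec k i) as [->|Hne].
  - assert (0 <= A * eta) by (apply Rmult_le_pos; assumption). lra.
  - assert (a i k * y k <= A * eta)
      by (apply Rmult_le_compat; [exact Hk0|apply Hy, Hk|exact HkA|apply Hsmall; assumption]).
    lra.
Qed.

Lemma alpha_compare n a l j y A eta d :
  (1 <= l <= n)%nat ->
  (forall k, (1 <= k <= n)%nat -> 0 <= a l k) ->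
  (forall k, (1 <= k <= n)%nat -> 0 <= a j k <= A) ->
  (forall k, (l < k <= n)%nat -> a j k <= a l k) ->
  d <= a l l - a j l ->
  nonneg_orthant n y -> 0 <= eta -> (forall k, (1 <= k < l)%nat -> y k <= eta) ->
  alpha n a j y <= alpha n a l y + INR n * A * eta - d * y l.
Proof.
  intros Hl Hal Haj Hcol Hd Hy Heta Hsmall. unfold alpha.
  assert (HAe : 0 <= A * eta) by (apply Rmult_le_pos; [destruct (Haj l Hl); lra|exact Heta]).
  apply Rle_trans with (sumN n (fun k => a l k * y k
      + (if Nat.eqb k l then - d * y l else 0) + (if Nat.ltb k l then A * eta else 0))).
  - apply sumN_le. intros k Hk.
    pose proof (Hy k Hk). pose proof (Hal k Hk). pose proof (Haj k Hk).
    destruct (Nat.eqb_spec k l) as [->|Hne]; [rewrite Nat.ltb_irrefl; nra|].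
    destruct (Nat.ltb_spec k l).
    + assert (a j k * y k <= A * eta)
        by (apply Rmult_le_compat; [lra|lra|lra|apply Hsmall; lia]).
      assert (0 <= a l k * y k) by (apply Rmult_le_pos; lra). lra.
    + assert (a j k <= a l k) by (apply Hcol; lia). nra.
  - rewrite !sumN_plus, (sumN_single n l (fun _ => - d * y l) Hl).
    assert (sumN n (fun k => if Nat.ltb k l then A * eta else 0) <= INR n * A * eta).
    { rewrite Rmult_assoc, <- sumN_const. apply sumN_le. intros k _. destruct (Nat.ltb k l); lra. }
    lra.
Qed.

Lemma diag_dominates_column n a l j :
  (1 <= l <= n)%nat -> (1 <= j <= n)%nat -> 0 < a l l ->
  alpha n a j (Yl a l) < 1 -> a j l < a l l.
Proof.
  intros Hl Hj Hll H. unfold Yl in H. rewrite alpha_unit in H by exact Hl.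
  apply (Rmult_lt_compat_r (a l l)) in H; [|exact Hll].
  rewrite Rmult_assoc, Rinv_l, Rmult_1_r, Rmult_1_l in H by lra. exact H.
Qed.

(* Testing the face condition of the theorem on vectors of [gamma_l] supported on
   {l, k}: beyond column [l], row [l] dominates every later row [j]. *)
Lemma row_dominates_later_rows n a l j k :
  (1 <= l <= n)%nat -> (l < j <= n)%nat -> (l < k <= n)%nat ->
  0 < a l l -> 0 <= a l k -> 0 <= a j k -> 0 <= a j l ->
  (forall y, nonneg_orthant n y -> alpha n a l y = 1 ->
     (forall m, (1 <= m <= l - 1)%nat -> y m = 0) -> alpha n a j y <= 1) ->
  a j k <= a l k.
Proof.
  intros Hl Hj Hk Hll Hlk Hjk Hjl Hface.
  destruct Hlk as [Hlk|Hlk].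
  - (* the point [e_k / a_lk] of [gamma_l] *)
    pose proof (Hface (fun m => if Nat.eqb m k then / a l k else 0)) as Hy.
    rewrite !alpha_unit in Hy by lia.
    assert (Hyk : a j k * / a l k <= 1).
    { apply Hy.
      - intros m _. destruct (Nat.eqb m k); [left; apply Rinv_0_lt_compat|]; lra.
      - field. lra.
      - intros m Hm. destruct (Nat.eqb_spec m k); [lia|reflexivity]. }
    apply (Rmult_le_compat_r (a l k)) in Hyk; [|lra].
    rewrite Rmult_assoc, Rinv_l, Rmult_1_r, Rmult_1_l in Hyk by lra. exact Hyk.
  - (* if [a_lk = 0 < a_jk], the point [e_l / a_ll + 2 e_k / a_jk] violates the condition *)
    apply Rnot_lt_le. intro Hpos. rewrite <- Hlk in Hpos.
    set (y := fun m => (if Nat.eqb m l then / a l l else 0)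
                       + (if Nat.eqb m k then 2 / a j k else 0)).
    assert (Hy : alpha n a j y <= 1).
    { apply Hface.
      - intros m _. unfold y. pose proof (Rinv_0_lt_compat _ Hll).
        assert (0 < 2 / a j k) by (apply Rdiv_lt_0_compat; lra).
        destruct (Nat.eqb m l), (Nat.eqb m k); lra.
      - unfold y. rewrite alpha_add, !alpha_unit by lia. rewrite <- Hlk. field. lra.
      - intros m Hm. unfold y.
        destruct (Nat.eqb_spec m l), (Nat.eqb_spec m k); try lia. ring. }
    unfold y in Hy. rewrite alpha_add, !alpha_unit in Hy by lia.
    assert (a j k * (2 / a j k) = 2) by (field; lra).
    assert (0 <= a j l * / a l l) by (apply Rmult_le_pos; [lra|left; apply Rinv_0_lt_compat; lra]).
    lra.
Qed.

Definition eventually (P : R -> Prop) : Prop := exists T, forall t, T <= t -> P t.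

Lemma eventually_mono (P Q : R -> Prop) :
  (forall t, P t -> Q t) -> eventually P -> eventually Q.
Proof. intros HPQ [T HT]. exists T. auto. Qed.

Lemma eventually_and (P Q : R -> Prop) :
  eventually P -> eventually Q -> eventually (fun t => P t /\ Q t).
Proof.
  intros [T1 H1] [T2 H2]. exists (Rmax T1 T2). intros t Ht.
  split; [apply H1|apply H2]; eapply Rle_trans; eauto; [apply Rmax_l|apply Rmax_r].
Qed.

Lemma eventually_ge (T0 : R) : eventually (fun t => T0 <= t).
Proof. exists T0. auto. Qed.

Lemma eventually_all N (P : nat -> R -> Prop) :
  (forall k, (1 <= k <= N)%nat -> eventually (P k)) ->
  eventually (fun t => forall k, (1 <= k <= N)%nat -> P k t).
Proof.
  induction N as [|N IH]; intros HP; [exists 0; intros; lia|].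
  destruct (eventually_and _ _ (IH ltac:(intros k Hk; apply HP; lia))
                               (HP (S N) ltac:(lia))) as [T HT].
  exists T. intros t Ht k Hk. destruct (HT t Ht) as [Hlow Hlast].
  destruct (Nat.eq_dec k (S N)) as [->|Hne]; [exact Hlast|apply Hlow; lia].
Qed.

Lemma derivable_lim_continuous f t l :
  derivable_pt_lim f t l -> continuity_pt f t.
Proof. intro H. apply derivable_continuous_pt. exists l. exact H. Qed.

Lemma continuity_eps f m : continuity_pt f m -> forall e, 0 < e ->
  exists d, 0 < d /\ forall s, Rabs (s - m) < d -> Rabs (f s - f m) < e.
Proof.
  intros Hc e He. destruct (Hc e He) as [d [Hd H]]. exists d. split; [exact Hd|].
  intros s Hs. destruct (Req_dec m s) as [<-|Hne].
  - rewrite Rminus_diag, Rabs_R0. exact He.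
  - apply (H s). split; [split; [exact I|exact Hne]|exact Hs].
Qed.

Lemma continuity_above f m c : continuity_pt f m -> c < f m ->
  exists d, 0 < d /\ forall s, Rabs (s - m) < d -> c < f s.
Proof.
  intros Hc Hlt. destruct (continuity_eps f m Hc (f m - c)) as [d [Hd H]]; [lra|].
  exists d. split; [exact Hd|]. intros s Hs. specialize (H s Hs). apply Rabs_def2 in H. lra.
Qed.

Lemma continuity_below f m c : continuity_pt f m -> f m < c ->
  exists d, 0 < d /\ forall s, Rabs (s - m) < d -> f s < c.
Proof.
  intros Hc Hlt. destruct (continuity_eps f m Hc (c - f m)) as [d [Hd H]]; [lra|].
  exists d. split; [exact Hd|]. intros s Hs. specialize (H s Hs). apply Rabs_def2 in H. lra.
Qed.

Lemma derivable_pt_lim_ln_comp f t l :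
  0 < f t -> derivable_pt_lim f t l -> derivable_pt_lim (fun s => ln (f s)) t (l / f t).
Proof.
  intros Hpos Hd. replace (l / f t) with (/ f t * l) by (field; lra).
  apply (derivable_pt_lim_comp f ln); [exact Hd|apply derivable_pt_lim_ln, Hpos].
Qed.

Lemma ln_le_iff u v : 0 < u -> 0 < v -> (ln u <= ln v <-> u <= v).
Proof.
  intros Hu Hv. split; intro H.
  - apply Rnot_lt_le. intro Hlt. pose proof (ln_increasing v u Hv Hlt). lra.
  - destruct H as [Hlt| ->]; [left; apply ln_increasing|right]; auto.
Qed.

Lemma increment_le (g g' : R -> R) u v K :
  u <= v -> (forall s, u <= s <= v -> derivable_pt_lim g s (g' s)) ->
  (forall s, u < s < v -> g' s <= K) -> g v - g u <= K * (v - u).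
Proof.
  intros Huv Hd HK. destruct (Req_dec u v) as [<-|Hne].
  - replace (u - u) with 0 by ring. lra.
  - destruct (MVT_cor2 g g' u v) as [s [Heq Hs]]; [lra|exact Hd|].
    rewrite Heq. apply Rmult_le_compat_r; [lra|apply HK; lra].
Qed.

Lemma increment_ge (g g' : R -> R) u v K :
  u <= v -> (forall s, u <= s <= v -> derivable_pt_lim g s (g' s)) ->
  (forall s, u < s < v -> K <= g' s) -> K * (v - u) <= g v - g u.
Proof.
  intros Huv Hd HK. destruct (Req_dec u v) as [<-|Hne].
  - replace (u - u) with 0 by ring. lra.
  - destruct (MVT_cor2 g g' u v) as [s [Heq Hs]]; [lra|exact Hd|].
    rewrite Heq. apply Rmult_le_compat_r; [lra|apply HK; lra].
Qed.

(* If [g] decreases at rate at least [k] on [T, +oo) while it is above [c],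
   it reaches [c]: otherwise it would drop by [k N] over any time [N]. *)
Lemma barrier_reached (g g' : R -> R) T c k : 0 < k ->
  (forall t, T <= t -> derivable_pt_lim g t (g' t) /\ (c <= g t -> g' t <= - k)) ->
  exists t1, T <= t1 /\ g t1 <= c.
Proof.
  intros Hk HT. apply NNPP. intro Hno.
  assert (Habove : forall t, T <= t -> c < g t)
    by (intros t Ht; apply Rnot_le_lt; intro Hle; apply Hno; eauto).
  set (N := (Rabs (g T - c) + 1) / k).
  assert (HkN : k * N = Rabs (g T - c) + 1) by (unfold N; field; lra).
  assert (HN : 0 < N) by (pose proof (Rabs_pos (g T - c)); nra).
  assert (Hdrop : g (T + N) - g T <= - k * (T + N - T)).
  { apply (increment_le g g'); [lra|intros s Hs; apply HT; lra|].
    intros s Hs. apply HT; [lra|left; apply Habove; lra]. }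
  pose proof (Habove (T + N) ltac:(lra)). pose proof (RRle_abs (g T - c)).
  replace (- k * (T + N - T)) with (- (k * N)) in Hdrop by ring. lra.
Qed.

(* Barrier principle: if [g] decreases at rate at least [k] whenever it is at
   or above the level [c], then [g] eventually stays at most [c]: after reaching
   [c] it cannot cross it again, by the mean-value bound after the last time it
   is at most [c]. *)
Lemma barrier_up (g g' : R -> R) c k : 0 < k ->
  eventually (fun t => derivable_pt_lim g t (g' t) /\ (c <= g t -> g' t <= - k)) ->
  eventually (fun t => g t <= c).
Proof.
  intros Hk [T HT].
  destruct (barrier_reached g g' T c k Hk HT) as [t1 [Ht1 Hg1]].
  exists t1. intros t2 Ht2.
  apply Rnot_lt_le. intro Hgt.
  (* [m] is the last time in [t1, t2] at which [g] is at most [c] *)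
  set (S := fun s => t1 <= s <= t2 /\ g s <= c).
  destruct (completeness S) as [m [Hub Hlub]];
    [exists t2; intros s [Hs _]; lra|exists t1; split; [lra|exact Hg1]|].
  assert (Hm : t1 <= m <= t2)
    by (split; [apply Hub; split; [lra|exact Hg1]|apply Hlub; intros s [Hs _]; lra]).
  assert (Hafter : forall s, m < s <= t2 -> c < g s).
  { intros s Hs. apply Rnot_le_lt. intro Hle.
    assert (s <= m) by (apply Hub; split; [lra|exact Hle]). lra. }
  assert (Hgm : g m <= c).
  { apply Rnot_lt_le. intro Hcm.
    destruct (continuity_above g m c) as [d [Hd Hnear]];
      [apply (derivable_lim_continuous g m (g' m)), HT; lra|exact Hcm|].
    assert (m <= m - d / 2); [|lra].
    apply Hlub. intros s [Hs Hgs]. apply Rnot_lt_le. intro Hs'.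
    assert (s <= m) by (apply Hub; split; assumption).
    assert (c < g s) by (apply Hnear, Rabs_def1; lra). lra. }
  assert (Hmt : m < t2) by (destruct (Rle_lt_or_eq_dec m t2) as [|<-]; lra).
  assert (Hdrop : g t2 - g m <= - k * (t2 - m)).
  { apply (increment_le g g'); [lra|intros s Hs; apply HT; lra|].
    intros s Hs. apply HT; [lra|left; apply Hafter; lra]. }
  assert (0 < k * (t2 - m)) by (apply Rmult_lt_0_compat; lra). lra.
Qed.

Lemma barrier_low (g g' : R -> R) c k : 0 < k ->
  eventually (fun t => derivable_pt_lim g t (g' t) /\ (g t <= c -> k <= g' t)) ->
  eventually (fun t => c <= g t).
Proof.
  intros Hk Hev.
  apply (eventually_mono (fun t => - g t <= - c)); [intros t Ht; lra|].
  apply (barrier_up (fun t => - g t) (fun t => - g' t) (- c) k Hk).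
  revert Hev. apply eventually_mono. intros t [Hd Hsign]. split.
  - apply derivable_pt_lim_opp, Hd.
  - intro Hle. assert (k <= g' t) by (apply Hsign; lra). lra.
Qed.

Lemma rate_barrier_up (f r : R -> R) c k : 0 < c -> 0 < k ->
  eventually (fun t => 0 < f t /\ derivable_pt_lim (fun s => ln (f s)) t (r t)
                       /\ (c <= f t -> r t <= - k)) ->
  eventually (fun t => f t <= c).
Proof.
  intros Hc Hk Hev.
  assert (Hln : eventually (fun t => ln (f t) <= ln c)).
  { apply (barrier_up (fun t => ln (f t)) r (ln c) k Hk). revert Hev.
    apply eventually_mono. intros t [Hpos [Hd Hsign]]. split; [exact Hd|].
    intro Hle. apply Hsign, ln_le_iff; assumption. }
  generalize (eventually_and _ _ Hev Hln). apply eventually_mono.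
  intros t [[Hpos _] Hle]. apply ln_le_iff; assumption.
Qed.

Lemma rate_barrier_low (f r : R -> R) c k : 0 < c -> 0 < k ->
  eventually (fun t => 0 < f t /\ derivable_pt_lim (fun s => ln (f s)) t (r t)
                       /\ (f t <= c -> k <= r t)) ->
  eventually (fun t => c <= f t).
Proof.
  intros Hc Hk Hev.
  assert (Hln : eventually (fun t => ln c <= ln (f t))).
  { apply (barrier_low (fun t => ln (f t)) r (ln c) k Hk). revert Hev.
    apply eventually_mono. intros t [Hpos [Hd Hsign]]. split; [exact Hd|].
    intro Hle. apply Hsign, ln_le_iff; assumption. }
  generalize (eventually_and _ _ Hev Hln). apply eventually_mono.
  intros t [[Hpos _] Hle]. apply ln_le_iff; assumption.
Qed.

Lemma real_induction (P : R -> Prop) :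
  (exists d, 0 < d /\ forall u, 0 <= u < d -> P u) ->
  (forall m, 0 < m -> (forall u, 0 <= u < m -> P u) ->
     exists d, 0 < d /\ forall u, 0 <= u < m + d -> P u) ->
  forall t, 0 <= t -> P t.
Proof.
  intros [d0 [Hd0 Hbase]] Hstep t Ht.
  destruct (Rlt_le_dec t d0) as [Hlt|Hge]; [apply Hbase; lra|].
  set (S := fun s => 0 <= s <= t /\ forall u, 0 <= u < s -> P u).
  destruct (completeness S) as [m [Hub Hlub]];
    [exists t; intros s [Hs _]; lra|exists d0; split; [lra|intros u Hu; apply Hbase; lra]|].
  assert (Hm0 : d0 <= m) by (apply Hub; split; [lra|intros u Hu; apply Hbase; lra]).
  assert (Hbelow : forall u, 0 <= u < m -> P u).
  { intros u Hu. apply NNPP. intro HnP.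
    assert (m <= u); [|lra].
    apply Hlub. intros s [Hs HPs]. apply Rnot_lt_le. intro Hus. apply HnP, HPs. lra. }
  destruct (Hstep m ltac:(lra) Hbelow) as [d [Hd Hext]].
  destruct (Rlt_le_dec t (m + d)) as [Htd|Htd]; [apply Hext; lra|].
  assert (m + d / 2 <= m) by (apply Hub; split; [lra|intros u Hu; apply Hext; lra]).
  lra.
Qed.

Section Solution.

Variables (n : nat) (a : nat -> nat -> R) (b : nat -> R) (x : R -> nat -> R).
Hypothesis Hb : forall i, (1 <= i <= n)%nat -> 0 < b i.
Hypothesis Haii : forall i, (1 <= i <= n)%nat -> 0 < a i i.
Hypothesis Haij : forall i j, (1 <= i <= n)%nat -> (1 <= j <= n)%nat -> 0 <= a i j.
Hypothesis Hsol : LV_solution n a b x.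
Hypothesis Hx0 : forall i, (1 <= i <= n)%nat -> 0 < x 0 i.

Definition growth (i : nat) (t : R) : R := b i * (1 - alpha n a i (x t)).

Lemma solution_continuous i t :
  (1 <= i <= n)%nat -> 0 < t -> continuity_pt (fun s => x s i) t.
Proof. intros Hi Ht. eapply derivable_lim_continuous. exact (proj1 Hsol i Hi t Ht). Qed.

Lemma growth_continuous i t : 0 < t -> continuity_pt (growth i) t.
Proof.
  intros Ht. unfold growth, alpha.
  apply (continuity_pt_scal (fun s => 1 - sumN n (fun j => a i j * x s j))).
  apply (continuity_pt_minus (fun _ => 1) (fun s => sumN n (fun j => a i j * x s j)));
    [apply continuity_pt_const; now intros u v|].
  apply (sumN_continuity n (fun s j => a i j * x s j)). intros k Hk.
  apply (continuity_pt_scal (fun s => x s k)), solution_continuous; assumption.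
Qed.

Lemma ln_solution_derivative i t : (1 <= i <= n)%nat -> 0 < t -> 0 < x t i ->
  derivable_pt_lim (fun s => ln (x s i)) t (growth i t).
Proof.
  intros Hi Ht Hpos.
  replace (growth i t) with (b i * x t i * (1 - alpha n a i (x t)) / x t i)
    by (unfold growth; field; lra).
  apply derivable_pt_lim_ln_comp; [exact Hpos|exact (proj1 Hsol i Hi t Ht)].
Qed.

(* Solutions starting in the interior of the orthant stay there: near a first
   vanishing time [m] the logarithm of [x_i] would have to go to [-oo], while
   its derivative, the continuous growth rate, is bounded on [m/2, m]. *)
Lemma solution_positive i t : (1 <= i <= n)%nat -> 0 <= t -> 0 < x t i.
Proof.
  intros Hi. revert t. apply real_induction.
  - destruct (proj2 Hsol i Hi (x 0 i) (Hx0 i Hi)) as [d [Hd Hnear]].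
    exists d. split; [exact Hd|]. intros u Hu. specialize (Hnear u Hu).
    apply Rabs_def2 in Hnear. lra.
  - intros m Hm Hbelow.
    destruct (continuity_ab_min (growth i) (m / 2) m) as [s0 [Hmin _]];
      [lra|intros s Hs; apply growth_continuous; lra|].
    set (K := Rmin 0 (growth i s0)).
    assert (HK : K <= 0 /\ K <= growth i s0) by (split; [apply Rmin_l|apply Rmin_r]).
    set (q := exp (ln (x (m / 2) i) + K * m)).
    assert (Hlow : forall u, m / 2 <= u < m -> q <= x u i).
    { intros u Hu. assert (Hxu : 0 < x u i) by (apply Hbelow; lra).
      apply (ln_le_iff q (x u i)); [apply exp_pos|exact Hxu|]. unfold q. rewrite ln_exp.
      assert (Hinc : K * (u - m / 2) <= ln (x u i) - ln (x (m / 2) i)).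
      { apply (increment_ge (fun s => ln (x s i)) (growth i)); [lra| |].
        - intros s Hs. apply ln_solution_derivative; [exact Hi|lra|apply Hbelow; lra].
        - intros s Hs. assert (growth i s0 <= growth i s) by (apply Hmin; lra). lra. }
      assert (K * m <= K * (u - m / 2)) by nra. lra. }
    assert (Hxm : 0 < x m i).
    { apply (Rlt_le_trans _ q); [apply exp_pos|]. apply Rnot_lt_le. intro Hlt.
      destruct (continuity_below (fun s => x s i) m q) as [d [Hd Hnear]];
        [apply solution_continuous; assumption|exact Hlt|].
      set (u := Rmax (m / 2) (m - d / 2)).
      assert (Hu : m / 2 <= u < m)
        by (split; [apply Rmax_l|apply Rmax_lub_lt; lra]).
      assert (Hud : m - d / 2 <= u) by apply Rmax_r.
      assert (x u i < q) by (apply Hnear, Rabs_def1; lra).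
      pose proof (Hlow u Hu). lra. }
    destruct (continuity_above (fun s => x s i) m 0) as [d [Hd Hnear]];
      [apply solution_continuous; assumption|exact Hxm|].
    exists d. split; [exact Hd|]. intros u Hu.
    destruct (Rlt_le_dec u m); [apply Hbelow; lra|apply Hnear, Rabs_def1; lra].
Qed.

Lemma solution_nonneg t : 0 <= t -> nonneg_orthant n (x t).
Proof. intros Ht k Hk. left. apply solution_positive; assumption. Qed.

Lemma solution_log_derivative i : (1 <= i <= n)%nat ->
  eventually (fun t => 0 < x t i
                       /\ derivable_pt_lim (fun s => ln (x s i)) t (growth i t)).
Proof.
  intros Hi. apply (eventually_mono (fun t => 1 <= t)); [|apply eventually_ge].
  intros t Ht. assert (Hpos : 0 < x t i) by (apply solution_positive; [exact Hi|lra]).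
  split; [exact Hpos|apply ln_solution_derivative; [exact Hi|lra|exact Hpos]].
Qed.

(* Above [1/a_ii] species [i] declines, since [alpha_i x >= a_ii x_i]; hence it
   eventually lies below any level exceeding its carrying capacity. *)
Lemma below_capacity i eps : (1 <= i <= n)%nat -> 0 < eps ->
  eventually (fun t => x t i <= (1 + eps) / a i i).
Proof.
  intros Hi Heps. pose proof (Haii i Hi). pose proof (Hb i Hi).
  apply (rate_barrier_up (fun t => x t i) (growth i) _ (b i * eps));
    [apply Rdiv_lt_0_compat; lra|apply Rmult_lt_0_compat; lra|].
  generalize (eventually_and _ _ (eventually_ge 0) (solution_log_derivative i Hi)).
  apply eventually_mono. intros t [Ht [Hpos Hd]]. do 2 (split; [assumption|]).
  intro Hcap.
  assert (a i i * x t i <= alpha n a i (x t))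
    by (apply alpha_ge_diag; [intros k Hk; apply Haij|apply solution_nonneg|]; assumption).
  assert (a i i * ((1 + eps) / a i i) = 1 + eps) by (field; lra).
  assert (1 + eps <= a i i * x t i) by nra.
  unfold growth. nra.
Qed.

Lemma coef_bound : exists A,
  forall j k, (1 <= j <= n)%nat -> (1 <= k <= n)%nat -> 0 <= a j k <= A.
Proof.
  exists (sumN n (fun j => sumN n (a j))). intros j k Hj Hk. split; [apply Haij; assumption|].
  apply (Rle_trans _ (sumN n (a j))).
  - apply (sumN_ge_term n (a j)); [intros; apply Haij|]; assumption.
  - apply (sumN_ge_term n (fun j => sumN n (a j))); [|exact Hj].
    intros m Hm. apply sumN_nonneg. intros; apply Haij; assumption.
Qed.

(** From here on the interaction matrix satisfies the conclusions of
    [diag_dominates_column] and [row_dominates_later_rows]. *)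
Hypothesis Hdiag : forall l j, (1 <= l <= n - 1)%nat -> (l < j <= n)%nat -> a j l < a l l.
Hypothesis Hcol : forall l j k, (1 <= l <= n - 1)%nat -> (l < j <= n)%nat ->
  (l < k <= n)%nat -> a j k <= a l k.

Lemma diagonal_gap l : (1 <= l <= n - 1)%nat ->
  exists d, 0 < d /\ d <= a l l /\ forall j, (l < j <= n)%nat -> d <= a l l - a j l.
Proof.
  intros Hl.
  destruct (finite_min_pos n (fun j => (l < j)%nat) (fun j => a l l - a j l)) as [d [Hd Hmin]].
  { intros j Hj Hlj. assert (a j l < a l l) by (apply Hdiag; lia). lra. }
  exists d. split; [exact Hd|]. split; [|intros j Hj; apply Hmin; lia].
  assert (d <= a l l - a n l) by (apply Hmin; lia).
  assert (0 <= a n l) by (apply Haij; lia). lra.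
Qed.

(* The exponents are chosen so that each
   term has relative growth rate [b_l (1 - alpha_j x)], directly comparable with
   the rate [b_l (1 - alpha_l x)] of species [l]. *)
Definition Z (l : nat) (t : R) : R :=
  sumN n (fun j => if Nat.ltb l j then Rpower (x t j) (b l / b j) else 0).

Definition Zslope (l : nat) (t : R) : R :=
  sumN n (fun j => if Nat.ltb l j
                   then Rpower (x t j) (b l / b j) * (b l * (1 - alpha n a j (x t)))
                   else 0).

Lemma Z_derivative l t : 0 < t -> derivable_pt_lim (Z l) t (Zslope l t).
Proof.
  intros Ht. unfold Z, Zslope.
  apply (sumN_derivable n (fun s j => if Nat.ltb l j then Rpower (x s j) (b l / b j) else 0)).
  intros j Hj. destruct (Nat.ltb l j); [|apply derivable_pt_lim_const].
  unfold Rpower. pose proof (Hb j Hj).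
  replace (exp (b l / b j * ln (x t j)) * (b l * (1 - alpha n a j (x t))))
    with (exp (b l / b j * ln (x t j)) * (b l / b j * growth j t))
    by (unfold growth; field; lra).
  apply (derivable_pt_lim_comp (fun s => b l / b j * ln (x s j)) exp);
    [|apply derivable_pt_lim_exp].
  apply (derivable_pt_lim_scal (fun s => ln (x s j))), ln_solution_derivative;
    [exact Hj|exact Ht|apply solution_positive; [exact Hj|lra]].
Qed.

Lemma Z_ge_term l t j : (l < j <= n)%nat -> Rpower (x t j) (b l / b j) <= Z l t.
Proof.
  intros Hj. apply (sumN_ge_selected n (Nat.ltb l) (fun k => Rpower (x t k) (b l / b k)));
    [intros k _; left; apply exp_pos|lia|apply Nat.ltb_lt; lia].
Qed.

Lemma Z_pos l t : (l < n)%nat -> 0 < Z l t.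
Proof.
  intros Hl. apply (Rlt_le_trans _ (Rpower (x t n) (b l / b n)));
    [apply exp_pos|apply Z_ge_term; lia].
Qed.

Lemma Z_log_derivative l t : (l < n)%nat -> 0 < t ->
  derivable_pt_lim (fun s => ln (Z l s)) t (Zslope l t / Z l t).
Proof.
  intros Hl Ht. apply derivable_pt_lim_ln_comp; [apply Z_pos, Hl|apply Z_derivative, Ht].
Qed.

Lemma Z_small_coords l t eta zeta : (1 <= l)%nat -> 0 < eta ->
  (forall j, (l < j <= n)%nat -> zeta <= Rpower eta (b l / b j)) -> Z l t <= zeta ->
  forall j, (l < j <= n)%nat -> x t j <= eta.
Proof.
  intros Hl Heta Hzeta HZ j Hj. apply Rnot_lt_le. intro Hbig.
  assert (0 < b l / b j) by (apply Rdiv_lt_0_compat; apply Hb; lia).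
  assert (Rpower eta (b l / b j) < Rpower (x t j) (b l / b j))
    by (apply Rlt_Rpower_l; [assumption|split; assumption]).
  pose proof (Z_ge_term l t j Hj). pose proof (Hzeta j Hj). lra.
Qed.

(* The bound on [Z_l] inherited from the carrying capacities. *)
Definition Zcap (l : nat) : R :=
  sumN n (fun j => if Nat.ltb l j then Rpower (2 / a j j) (b l / b j) else 0).

Lemma Zcap_pos l : (l < n)%nat -> 0 < Zcap l.
Proof.
  intros Hl. apply (Rlt_le_trans _ (Rpower (2 / a n n) (b l / b n))); [apply exp_pos|].
  apply (sumN_ge_selected n (Nat.ltb l) (fun k => Rpower (2 / a k k) (b l / b k)));
    [intros k _; left; apply exp_pos|lia|apply Nat.ltb_lt; lia].
Qed.

Lemma Z_bounded l : (1 <= l <= n)%nat -> eventually (fun t => Z l t <= Zcap l).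
Proof.
  intros Hl.
  generalize (eventually_and _ _ (eventually_ge 0)
    (eventually_all n (fun j t => x t j <= (1 + 1) / a j j)
       (fun j Hj => below_capacity j 1 Hj Rlt_0_1))).
  apply eventually_mono. intros t [Ht Hcap]. unfold Z, Zcap. apply sumN_le.
  intros j Hj. destruct (Nat.ltb l j); [|lra].
  apply Rle_Rpower_l; [left; apply Rdiv_lt_0_compat; apply Hb; assumption|].
  split; [apply solution_positive; assumption|].
  replace 2 with (1 + 1) by ring. apply Hcap, Hj.
Qed.

Lemma Z_rate_lower l d A eta t : (1 <= l <= n - 1)%nat ->
  (forall j, (l < j <= n)%nat -> d <= a l l - a j l) ->
  (forall j k, (1 <= j <= n)%nat -> (1 <= k <= n)%nat -> 0 <= a j k <= A) ->
  0 <= t -> 0 <= eta -> (forall k, (1 <= k < l)%nat -> x t k <= eta) ->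
  b l * (1 - alpha n a l (x t) - INR n * A * eta + d * x t l) <= Zslope l t / Z l t.
Proof.
  intros Hl Hgap HA Ht Heta Hbefore.
  assert (HZ : 0 < Z l t) by (apply Z_pos; lia).
  apply (Rmult_le_reg_r (Z l t)); [exact HZ|].
  replace (Zslope l t / Z l t * Z l t) with (Zslope l t) by (field; lra).
  unfold Z, Zslope. rewrite <- sumN_scal. apply sumN_le. intros j Hj.
  destruct (Nat.ltb_spec l j) as [Hlj|]; [|lra].
  assert (alpha n a j (x t) <= alpha n a l (x t) + INR n * A * eta - d * x t l).
  { apply alpha_compare; try lia; try assumption.
    - intros k Hk. apply Haij; lia.
    - intros k Hk. apply HA; lia.
    - intros k Hk. apply Hcol; lia.
    - apply Hgap; lia.
    - apply solution_nonneg, Ht. }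
  assert (0 < b l) by (apply Hb; lia).
  assert (0 < Rpower (x t j) (b l / b j)) by apply exp_pos.
  rewrite (Rmult_comm (Rpower _ _)).
  apply Rmult_le_compat_r; [lra|]. apply Rmult_le_compat_l; lra.
Qed.

Definition vanishes (k : nat) : Prop :=
  forall eps, 0 < eps -> eventually (fun t => x t k <= eps).

Lemma vanish_jointly l eta : (l <= n)%nat -> 0 < eta ->
  (forall k, (1 <= k < l)%nat -> vanishes k) ->
  eventually (fun t => forall k, (1 <= k < l)%nat -> x t k <= eta).
Proof.
  intros Hln Heta Hvan.
  apply (eventually_mono (fun t => forall k, (1 <= k <= n)%nat -> (k < l)%nat -> x t k <= eta));
    [intros t H k Hk; apply H; lia|].
  apply eventually_all. intros k Hk. destruct (Nat.ltb_spec k l).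
  - apply (eventually_mono (fun t => x t k <= eta)); [auto|apply Hvan; [lia|exact Heta]].
  - exists 0. intros; lia.
Qed.

(* Persistence: if the species before [l] die out, [Z_l] stays away from 0.
   When [Z_l] is small all species beyond [l] are small, so [alpha_l x] is
   essentially [a_ll x_l <= 1 + w/4] (with [w = d / a_ll]), and the rate of
   [Z_l] from [Z_rate_lower] is at least [b_l w / 2]. *)
Lemma Z_persists l : (1 <= l <= n - 1)%nat -> (forall k, (1 <= k < l)%nat -> vanishes k) ->
  exists zeta, 0 < zeta /\ eventually (fun t => zeta <= Z l t).
Proof.
  intros Hl Hvan.
  destruct (diagonal_gap l Hl) as [d [Hd [Hdl Hgap]]].
  destruct coef_bound as [A HA].
  assert (HA0 : 0 <= A) by (destruct (HA l l); [lia|lia|lra]).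
  assert (Hll : 0 < a l l) by (apply Haii; lia).
  assert (Hbl : 0 < b l) by (apply Hb; lia).
  set (w := d / a l l). assert (Hw : 0 < w) by (apply Rdiv_lt_0_compat; lra).
  pose proof (pos_INR n).
  assert (HnA : 0 <= INR n * A) by (apply Rmult_le_pos; lra).
  set (eta := w / 4 / (2 * (INR n * A) + 1)).
  assert (Heta : 0 < eta) by (apply Rdiv_lt_0_compat; lra).
  assert (Hslack : 2 * (INR n * A) * eta <= w / 4).
  { assert ((2 * (INR n * A) + 1) * eta = w / 4) by (unfold eta; field; lra). lra. }
  destruct (finite_min_pos n (fun j => (l < j)%nat) (fun j => Rpower eta (b l / b j)))
    as [zeta [Hzeta Hzmin]]; [intros; apply exp_pos|].
  exists zeta. split; [exact Hzeta|].
  apply (rate_barrier_low (Z l) (fun t => Zslope l t / Z l t) zeta (b l * (w / 2)));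
    [exact Hzeta|apply Rmult_lt_0_compat; lra|].
  generalize (eventually_and _ _ (eventually_ge 1)
    (eventually_and _ _ (vanish_jointly l eta ltac:(lia) Heta Hvan)
                        (below_capacity l (w / 4) ltac:(lia) ltac:(lra)))).
  apply eventually_mono. intros t [Ht [Hbefore Hcap]].
  assert (HZ : 0 < Z l t) by (apply Z_pos; lia).
  split; [exact HZ|split; [apply Z_log_derivative; [lia|lra]|]].
  intro Hsmall.
  assert (Hbeyond : forall j, (l < j <= n)%nat -> x t j <= eta)
    by (apply (Z_small_coords l t eta zeta);
        [lia|exact Heta|intros j Hj; apply Hzmin; lia|exact Hsmall]).
  assert (Hal : alpha n a l (x t) <= a l l * x t l + INR n * A * eta).
  { apply alpha_le_diag; [intros k Hk; apply HA; lia|apply solution_nonneg; lra|lia|lra|].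
    intros k Hk Hkl. destruct (Nat.lt_ge_cases k l); [apply Hbefore|apply Hbeyond]; lia. }
  assert (Hxl : (a l l - d) * x t l <= (1 - w) * (1 + w / 4)).
  { replace ((1 - w) * (1 + w / 4)) with ((a l l - d) * ((1 + w / 4) / a l l))
      by (unfold w; field; lra).
    apply Rmult_le_compat_l; [lra|exact Hcap]. }
  eapply Rle_trans; [|apply (Z_rate_lower l d A eta t); auto; lra].
  apply Rmult_le_compat_l; [lra|]. nra.
Qed.

Lemma ratio_log_derivative l t : (1 <= l < n)%nat -> 0 < t ->
  derivable_pt_lim (fun s => ln (x s l / Z l s)) t (growth l t - Zslope l t / Z l t).
Proof.
  intros Hl Ht.
  apply (derivable_pt_lim_locally_ext (fun s => ln (x s l) - ln (Z l s)) _ t 0 (t + 1));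
    [lra| |].
  - intros s Hs. unfold Rdiv.
    rewrite ln_mult, ln_Rinv; [ring|apply Z_pos; lia|apply solution_positive; [lia|lra]
                                   |apply Rinv_0_lt_compat, Z_pos; lia].
  - apply (derivable_pt_lim_minus (fun s => ln (x s l)) (fun s => ln (Z l s)));
      [apply ln_solution_derivative; [lia|exact Ht|apply solution_positive; [lia|lra]]
      |apply Z_log_derivative; [lia|exact Ht]].
Qed.

(* If the species before [l] die out, the ratio [x_l / Z_l] eventually drops
   below any level [c]: its relative rate is at most [b_l (n A eta - d x_l)],
   which is negative when the ratio exceeds [c], as [Z_l] persists. *)
Lemma ratio_small l c : (1 <= l <= n - 1)%nat ->
  (forall k, (1 <= k < l)%nat -> vanishes k) -> 0 < c ->
  eventually (fun t => x t l / Z l t <= c).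
Proof.
  intros Hl Hvan Hc.
  destruct (diagonal_gap l Hl) as [d [Hd [_ Hgap]]].
  destruct coef_bound as [A HA].
  assert (HA0 : 0 <= A) by (destruct (HA l l); [lia|lia|lra]).
  assert (Hbl : 0 < b l) by (apply Hb; lia).
  destruct (Z_persists l Hl Hvan) as [zeta [Hzeta HZlow]].
  assert (Hdcz : 0 < d * c * zeta) by (apply Rmult_lt_0_compat; [apply Rmult_lt_0_compat|]; lra).
  pose proof (pos_INR n).
  assert (HnA : 0 <= INR n * A) by (apply Rmult_le_pos; lra).
  set (eta := d * c * zeta / (2 * (INR n * A + 1))).
  assert (Heta : 0 < eta) by (apply Rdiv_lt_0_compat; lra).
  assert (Hslack : INR n * A * eta <= d * c * zeta / 2).
  { assert (2 * (INR n * A + 1) * eta = d * c * zeta) by (unfold eta; field; lra).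
    assert (0 <= INR n * A * eta) by (apply Rmult_le_pos; lra). lra. }
  apply (rate_barrier_up (fun t => x t l / Z l t)
           (fun t => growth l t - Zslope l t / Z l t) c (b l * (d * c * zeta / 2)));
    [exact Hc|apply Rmult_lt_0_compat; lra|].
  generalize (eventually_and _ _ (eventually_ge 1)
    (eventually_and _ _ (vanish_jointly l eta ltac:(lia) Heta Hvan) HZlow)).
  apply eventually_mono. intros t [Ht [Hbefore Hzt]].
  assert (HZ : 0 < Z l t) by (apply Z_pos; lia).
  assert (Hxl : 0 < x t l) by (apply solution_positive; [lia|lra]).
  split; [apply Rdiv_lt_0_compat; assumption|].
  split; [apply ratio_log_derivative; [lia|lra]|].
  intro Hbig.
  assert (c * Z l t <= x t l).
  { apply (Rmult_le_compat_r (Z l t)) in Hbig; [|lra].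
    replace (x t l / Z l t * Z l t) with (x t l) in Hbig by (field; lra). lra. }
  assert (c * zeta <= c * Z l t) by (apply Rmult_le_compat_l; lra).
  assert (d * (c * zeta) <= d * x t l) by (apply Rmult_le_compat_l; lra).
  assert (b l * (INR n * A * eta - d * x t l) <= b l * - (d * c * zeta / 2))
    by (apply Rmult_le_compat_l; lra).
  pose proof (Z_rate_lower l d A eta t Hl Hgap HA ltac:(lra) ltac:(lra) Hbefore).
  unfold growth. lra.
Qed.

(* Inductive step: if the species before [l] die out, so does species [l],
   since [x_l = (x_l / Z_l) Z_l <= (x_l / Z_l) Zcap_l] eventually. *)
Lemma vanishes_step l : (1 <= l <= n - 1)%nat ->
  (forall k, (1 <= k < l)%nat -> vanishes k) -> vanishes l.
Proof.
  intros Hl Hvan eps Heps.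
  assert (Hcap : 0 < Zcap l) by (apply Zcap_pos; lia).
  generalize (eventually_and _ _
    (ratio_small l (eps / Zcap l) Hl Hvan ltac:(apply Rdiv_lt_0_compat; lra))
    (eventually_and _ _ (Z_bounded l ltac:(lia)) (eventually_ge 0))).
  apply eventually_mono. intros t [Hq [HZcap Ht]].
  assert (HZ : 0 < Z l t) by (apply Z_pos; lia).
  assert (0 < x t l) by (apply solution_positive; [lia|lra]).
  replace (x t l) with (x t l / Z l t * Z l t) by (field; lra).
  replace eps with (eps / Zcap l * Zcap l) by (field; lra).
  apply Rmult_le_compat; [left; apply Rdiv_lt_0_compat|lra|..]; assumption.
Qed.

Lemma vanishes_before_last l : (1 <= l <= n - 1)%nat -> vanishes l.
Proof.
  induction l as [l IH] using (well_founded_induction Wf_nat.lt_wf). intros Hl.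
  apply vanishes_step; [exact Hl|]. intros k Hk. apply IH; lia.
Qed.

(* Once all other species are negligible, species [n] grows whenever it is below
   [(1 - eps) / a_nn]. *)
Lemma last_above_capacity eps : (1 <= n)%nat -> 0 < eps < 1 ->
  eventually (fun t => (1 - eps) / a n n <= x t n).
Proof.
  intros Hn Heps.
  destruct coef_bound as [A HA].
  assert (HA0 : 0 <= A) by (destruct (HA n n); [lia|lia|lra]).
  assert (Hnn : 0 < a n n) by (apply Haii; lia).
  assert (Hbn : 0 < b n) by (apply Hb; lia).
  pose proof (pos_INR n).
  assert (HnA : 0 <= INR n * A) by (apply Rmult_le_pos; lra).
  set (eta := eps / (2 * (INR n * A + 1))).
  assert (Heta : 0 < eta) by (apply Rdiv_lt_0_compat; lra).
  assert (Hslack : INR n * A * eta <= eps / 2).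
  { assert (2 * (INR n * A + 1) * eta = eps) by (unfold eta; field; lra).
    assert (0 <= INR n * A * eta) by (apply Rmult_le_pos; lra). lra. }
  apply (rate_barrier_low (fun t => x t n) (growth n) _ (b n * (eps / 2)));
    [apply Rdiv_lt_0_compat; lra|apply Rmult_lt_0_compat; lra|].
  generalize (eventually_and _ _ (solution_log_derivative n ltac:(lia))
    (eventually_and _ _ (eventually_ge 0)
       (vanish_jointly n eta ltac:(lia) Heta
          (fun k Hk => vanishes_before_last k ltac:(lia))))).
  apply eventually_mono. intros t [[Hpos Hd] [Ht Hbefore]].
  do 2 (split; [assumption|]). intro Hlow.
  assert (alpha n a n (x t) <= a n n * x t n + INR n * A * eta).
  { apply alpha_le_diag; [intros k Hk; apply HA; lia|apply solution_nonneg, Ht|lia|lra|].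
    intros k Hk Hkn. apply Hbefore; lia. }
  assert (a n n * ((1 - eps) / a n n) = 1 - eps) by (field; lra).
  assert (a n n * x t n <= 1 - eps) by nra.
  unfold growth. nra.
Qed.

Lemma converges_to_last i eps : (1 <= i <= n)%nat -> 0 < eps ->
  eventually (fun t => Rabs (x t i - Yl a n i) < eps).
Proof.
  intros Hi Heps. unfold Yl. destruct (Nat.eqb_spec i n) as [->|Hne].
  - assert (Hnn : 0 < a n n) by (apply Haii; lia).
    set (e := Rmin (1 / 2) (eps * a n n / 2)).
    assert (He : 0 < e)
      by (apply Rmin_pos; [lra|apply Rdiv_lt_0_compat; [apply Rmult_lt_0_compat|]; lra]).
    assert (He1 : e <= 1 / 2) by apply Rmin_l.
    assert (He2 : e / a n n <= eps / 2).
    { assert (e <= eps * a n n / 2) by apply Rmin_r.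
      apply (Rmult_le_reg_r (a n n)); [exact Hnn|].
      replace (e / a n n * a n n) with e by (field; lra). lra. }
    generalize (eventually_and _ _ (below_capacity n e Hi He)
                  (last_above_capacity e ltac:(lia) ltac:(lra))).
    apply eventually_mono. intros t [Hup Hlow].
    replace ((1 + e) / a n n) with (/ a n n + e / a n n) in Hup by (field; lra).
    replace ((1 - e) / a n n) with (/ a n n - e / a n n) in Hlow by (field; lra).
    apply Rabs_def1; lra.
  - generalize (eventually_and _ _ (eventually_ge 0)
                  (vanishes_before_last i ltac:(lia) (eps / 2) ltac:(lra))).
    apply eventually_mono. intros t [Ht Hsmall].
    assert (0 < x t i) by (apply solution_positive; [exact Hi|exact Ht]).
    apply Rabs_def1; lra.
Qed.

End Solution.

Theorem corollary2p13 (n : nat) (a : nat -> nat -> R) (b : nat -> R)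
  (Hn : (2 <= n)%nat)
  (Hb : forall i, (1 <= i <= n)%nat -> 0 < b i)
  (Haii : forall i, (1 <= i <= n)%nat -> 0 < a i i)
  (Haij : forall i j, (1 <= i <= n)%nat -> (1 <= j <= n)%nat -> 0 <= a i j)
  (H1 : forall l j, (1 <= l <= n - 1)%nat -> (l < j <= n)%nat ->
          alpha n a j (Yl a l) < 1)
  (H2 : forall l j, (1 <= l <= n - 1)%nat -> (l < j <= n)%nat ->
          forall y : nat -> R,
            nonneg_orthant n y ->
            alpha n a l y = 1 ->
            (forall k, (1 <= k <= l - 1)%nat -> y k = 0) ->
            alpha n a j y <= 1) :
  global_attractor n a b (Yl a n).
Proof.
  assert (Hdiag : forall l j, (1 <= l <= n - 1)%nat -> (l < j <= n)%nat -> a j l < a l l).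
  { intros l j Hl Hj.
    apply (diag_dominates_column n); [lia|lia|apply Haii; lia|apply H1; assumption]. }
  assert (Hcol : forall l j k, (1 <= l <= n - 1)%nat -> (l < j <= n)%nat ->
                   (l < k <= n)%nat -> a j k <= a l k).
  { intros l j k Hl Hj Hk.
    apply (row_dominates_later_rows n a l j k); try lia;
      [apply Haii|apply Haij|apply Haij|apply Haij|apply H2]; lia. }
  split.
  - intros k Hk. unfold Yl. destruct (Nat.eqb_spec k n) as [->|Hne]; [|lra].
    left. apply Rinv_0_lt_compat, Haii. lia.
  - intros x Hsol Hx0 i Hi eps Heps.
    exact (converges_to_last n a b x Hb Haii Haij Hsol Hx0 Hdiag Hcol i eps Hi Heps).
Qed.
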